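(* Let $n,a,b$ be positive integers and $c$ a nonnegative integer. The polytopes $\mathcal F_{k^{a,b,c}_{n+2}(S)}$, $S\subseteq[n]$, are interior disjoint and satisfy $$\mathcal F_{k^{a,b+1,c}_{n+2}}\equiv\bigcup_{S\subseteq[n]}\mathcal F_{k^{a,b,c}_{n+2}(S)};$$ that is, $\mathcal F_{k^{a,b+1,c}_{n+2}}$ is integrally equivalent to a union of $2^n$ polytopes $P_S$ ($S\subseteq[n]$) with pairwise disjoint interiors, where each $P_S$ is integrally equivalent to $\mathcal F_{k^{a,b,c}_{n+2}(S)}$.
   Context: For a directed multigraph $G$ on $\{0,\dots,n+1\}$ with edges $(i,j)$ oriented $i\to j$, $i<j$, $\mathcal F_G$ is the flow polytope: the set of $f\in\mathbb R_{\ge0}^{E(G)}$ such that the net flow (outgoing minus incoming) is $1$ at vertex $0$, $-1$ at vertex $n+1$ and $0$ at every other vertex. Two polytopes $P\subset\mathbb R^p$, $Q\subset\mathbb R^q$ are integrally equivalent ($P\equiv Q$) if there is an affine map $\mathbb R^p\to\mathbb R^q$ restricting to a bijection $P\to Q$ and to a bijection $\mathrm{aff}(P)\cap\mathbb Z^p\to\mathrm{aff}(Q)\cap\mathbb Z^q$. $k_{n+2}^{a,b,c}$ is the multigraph on $\{0,\dots,n+1\}$ with edge $(0,i)$ of multiplicity $a$ and $(i,n+1)$ of multiplicity $b$ for each $i\in[n]$, and edge $(i,j)$ of multiplicity $c$ for $1\le i<j\le n$. For $S\subseteq[n]$, $k^{a,b,c}_{n+2}(S)$ is obtained from $k^{a,b,c}_{n+2}$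 by adding $n$ edges $(0,n+1)$ and, for each $i\in S$, deleting one of the $a$ copies of $(0,i)$ and adding one edge $(i,n+1)$. *)

From HB Require Import structures.
From mathcomp Require Import all_boot all_order all_algebra.
From mathcomp Require Import reals.
Set Implicit Arguments. Unset Strict Implicit. Unset Printing Implicit Defensive.
Import Order.TTheory GRing.Theory Num.Theory.
Local Open Scope ring_scope.

(* A directed multigraph on vertices {0,...,n+1} is a list of edges (i,j),
   i < j; the edge set E(G) is indexed by 'I_(size E). *)
Definition mgraph := seq (nat * nat).

Definition inner_pairs (n : nat) : seq (nat * nat) :=
  flatten [seq [seq (i, j) | j <- iota i.+1 (n - i)] | i <- iota 1 n].

Definition kabc (n a b c : nat) : mgraph :=
  flatten [seq nseq a (0%N, i) | i <- iota 1 n]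
  ++ flatten [seq nseq b (i, n.+1) | i <- iota 1 n]
  ++ flatten [seq nseq c p | p <- inner_pairs n].

(* k_{n+2}^{a,b,c}(S), S a subset of [n] encoded as {set 'I_n}
   (k : 'I_n stands for the vertex k+1). *)
Definition kabcS (n a b c : nat) (S : {set 'I_n}) : mgraph :=
  nseq n (0%N, n.+1)
  ++ flatten [seq nseq (a - (k \in S)) (0%N, (val k).+1) | k <- enum 'I_n]
  ++ flatten [seq nseq (b + (k \in S)) ((val k).+1, n.+1) | k <- enum 'I_n]
  ++ flatten [seq nseq c p | p <- inner_pairs n].

Section Poly.
Variable R : realType.

Definition flow_polytope (n : nat) (E : mgraph) : 'rV[R]_(size E) -> Prop :=
  fun f =>
    (forall e : 'I_(size E), 0 <= f 0 e) /\
    (forall v : 'I_n.+2,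
       \sum_(e < size E | (nth (0%N, 0%N) E e).1 == val v) f 0 e
     - \sum_(e < size E | (nth (0%N, 0%N) E e).2 == val v) f 0 e
     = (val v == 0%N)%:R - (val v == n.+1)%:R).

Definition aff (p : nat) (P : 'rV[R]_p -> Prop) : 'rV[R]_p -> Prop :=
  fun x => exists (k : nat) (pts : 'I_k -> 'rV[R]_p) (w : 'I_k -> R),
    (forall i, P (pts i)) /\ \sum_(i < k) w i = 1 /\
    x = \sum_(i < k) w i *: pts i.

Definition is_int_pt (p : nat) (x : 'rV[R]_p) : Prop :=
  forall i, exists z : int, x 0 i = z%:~R.

Definition bij_on (p q : nat) (f : 'rV[R]_p -> 'rV[R]_q)
  (A : 'rV[R]_p -> Prop) (B : 'rV[R]_q -> Prop) : Prop :=
  (forall x, A x -> B (f x)) /\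
  (forall x y, A x -> A y -> f x = f y -> x = y) /\
  (forall y, B y -> exists x, A x /\ f x = y).

Definition int_equiv (p q : nat) (P : 'rV[R]_p -> Prop) (Q : 'rV[R]_q -> Prop)
  : Prop :=
  exists (A : 'M[R]_(p, q)) (b : 'rV[R]_q),
    bij_on (fun x => x *m A + b) P Q /\
    bij_on (fun x => x *m A + b)
      (fun x => aff P x /\ is_int_pt x) (fun y => aff Q y /\ is_int_pt y).

Definition relint (p : nat) (P : 'rV[R]_p -> Prop) : 'rV[R]_p -> Prop :=
  fun x => P x /\ exists e : R, 0 < e /\
    forall y, aff P y -> (forall i, `|y 0 i - x 0 i| < e) -> P y.

End Poly.

From HB Require Import structures.
From mathcomp Require Import all_boot all_order all_algebra all_fingroup.
From mathcomp Require Import reals.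
From mathcomp Require Import ring lra zify.
Set Implicit Arguments. Unset Strict Implicit. Unset Printing Implicit Defensive.
Import Order.TTheory GRing.Theory Num.Theory.
Local Open Scope ring_scope.

(* Index the edges of G = k^{a,b+1,c}_{n+2} so that every inner vertex k has a
   distinguished in-edge (0,k) and a distinguished out-edge, one copy of (k,n+1); the
   remaining edges are one more copy of each (k,n+1) together with k^{a-1,b-1,c}_{n+2}.
   The cell P_S of F_G consists of the flows f with f(in_k) <= f(out_k) for k in S and
   f(out_k) <= f(in_k) for k not in S; these cells cover F_G.  On P_S, route the common
   amount min(f(in_k), f(out_k)) of the path 0 -> k -> n+1 through a new edge (0,n+1)
   and leave the excess on out_k (k in S) or on in_k (k not in S).  This unimodular
   change of coordinates maps P_S onto the flow polytope of G(S) = k^{a,b,c}_{n+2}(S).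
   If k is in S but not in T, every point of P_S has f(in_k) <= f(out_k), while from a
   relative interior point of P_T one can move a little flow from the path through the
   extra copy of (k,n+1) to the path through out_k inside aff P_T, making
   f(out_k) > f(in_k); so P_S and P_T have disjoint relative interiors. *)

Section IntegralEquivalence.
Variable R : realType.
Implicit Types p q s : nat.

Lemma is_int_ptP p (x : 'rV[R]_p) : is_int_pt x <-> forall i, x 0 i \is a Num.int.
Proof. by split=> x_int i; [have [z ->] := x_int i | apply/intrP]. Qed.

Lemma aff_linear p q (f : 'rV[R]_p -> 'rV[R]_q) (P : 'rV[R]_p -> Prop)
    (Q : 'rV[R]_q -> Prop) :
  linear f -> (forall x, P x -> Q (f x)) -> forall x, aff P x -> aff Q (f x).
Proof.
move=> f_lin PQ _ [k [pts [w [P_pts [w1 ->]]]]].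
pose fL : {linear 'rV[R]_p -> 'rV[R]_q} :=
  HB.pack f (GRing.isLinear.Build _ _ _ _ f f_lin).
exists k, (f \o pts), w; split=> [i|]; first exact: PQ.
split=> //; rewrite -[f _]/(fL _) linear_sum.
by apply: eq_bigr => i _; rewrite linearZ.
Qed.

Lemma mul_rV_lin1_linear p q (f : 'rV[R]_p -> 'rV[R]_q) :
  linear f -> forall x, x *m lin1_mx f = f x.
Proof.
move=> f_lin x.
exact: (mul_rV_lin1 (HB.pack f (GRing.isLinear.Build _ _ _ _ f f_lin))).
Qed.

Lemma bij_on_cancel p q (f : 'rV[R]_p -> 'rV[R]_q) (g : 'rV[R]_q -> 'rV[R]_p) A B :
  cancel f g -> cancel g f ->
  (forall x, A x -> B (f x)) -> (forall y, B y -> A (g y)) -> bij_on f A B.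
Proof.
move=> fK gK AB BA; split=> //; split=> [x y _ _ /(congr1 g)|y By].
  by rewrite !fK.
by exists (g y); rewrite gK; split=> //; apply: BA.
Qed.

Lemma bij_on_comp p q s (f : 'rV[R]_p -> 'rV[R]_q) (g : 'rV[R]_q -> 'rV[R]_s) A B C :
  bij_on f A B -> bij_on g B C -> bij_on (g \o f) A C.
Proof.
move=> [fAB [f_inj f_onto]] [gBC [g_inj g_onto]]; split=> [x /fAB /gBC //|].
split=> [x y Ax Ay /g_inj fxy|z /g_onto [y [By <-]]].
  by apply: f_inj => //; apply: fxy; apply: fAB.
by have [x [Ax <-]] := f_onto y By; exists x.
Qed.

Lemma eq_bij_on p q (f g : 'rV[R]_p -> 'rV[R]_q) A B :
  f =1 g -> bij_on f A B -> bij_on g A B.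
Proof.
move=> fg [fAB [f_inj f_onto]]; split=> [x|]; first by rewrite -fg; apply: fAB.
split=> [x y Ax Ay|y /f_onto [x [Ax <-]]]; first by rewrite -!fg; apply: f_inj.
by exists x; rewrite fg.
Qed.

Lemma int_equiv_trans p q s (P : 'rV[R]_p -> Prop) (Q : 'rV[R]_q -> Prop)
    (T : 'rV[R]_s -> Prop) :
  int_equiv P Q -> int_equiv Q T -> int_equiv P T.
Proof.
move=> [A [b [PQ PQ_int]]] [A' [b' [QT QT_int]]].
exists (A *m A'), (b *m A' + b').
have affE x : (x *m A + b) *m A' + b' = x *m (A *m A') + (b *m A' + b').
  by rewrite mulmxDl mulmxA addrA.
by split; apply: (eq_bij_on affE); [exact: bij_on_comp PQ QT | exact: bij_on_comp PQ_int QT_int].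
Qed.

Lemma int_equiv_linear p q (f : 'rV[R]_p -> 'rV[R]_q) (g : 'rV[R]_q -> 'rV[R]_p)
    (P : 'rV[R]_p -> Prop) (Q : 'rV[R]_q -> Prop) :
  linear f -> linear g -> cancel f g -> cancel g f ->
  (forall x, is_int_pt x -> is_int_pt (f x)) ->
  (forall y, is_int_pt y -> is_int_pt (g y)) ->
  (forall x, P x -> Q (f x)) -> (forall y, Q y -> P (g y)) ->
  int_equiv P Q.
Proof.
move=> f_lin g_lin fK gK f_int g_int PQ QP; exists (lin1_mx f), 0.
have fE x : x *m lin1_mx f + 0 = f x by rewrite addr0 mul_rV_lin1_linear.
have bij_f (A : 'rV[R]_p -> Prop) (B : 'rV[R]_q -> Prop) :
    (forall x, A x -> B (f x)) -> (forall y, B y -> A (g y)) ->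
    bij_on (fun x => x *m lin1_mx f + 0) A B.
  move=> AB BA; apply: (bij_on_cancel (g := g)) => [x|y|x Ax|//].
  - by rewrite fE fK.
  - by rewrite fE gK.
  - by rewrite fE; apply: AB.
split; apply: bij_f => // [x [Px x_int]|y [Qy y_int]]; split.
- exact: aff_linear Px.
- exact: f_int.
- exact: aff_linear Qy.
- exact: g_int.
Qed.

Lemma int_equiv_ext p (P Q : 'rV[R]_p -> Prop) :
  (forall x, P x <-> Q x) -> int_equiv P Q.
Proof.
by move=> PQ; apply: (@int_equiv_linear _ _ id id) => // x /PQ.
Qed.

Lemma aff_translate p (P : 'rV[R]_p -> Prop) x u v t :
  P x -> P u -> P v -> aff P (x + t *: (u - v)).
Proof.
move=> Px Pu Pv; exists 3, (nth x [:: x; u; v]), (nth 0 [:: 1; t; - t]).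
split; first by case=> [[|[|[|i]]] lt_i3].
split; first by rewrite !big_ord_recl big_ord0 /=; ring.
by apply/rowP => i; rewrite !big_ord_recl big_ord0 /= !mxE; ring.
Qed.

Lemma relint_translate p (P : 'rV[R]_p -> Prop) x u v :
  relint P x -> P u -> P v -> exists2 t : R, 0 < t & P (x + t *: (u - v)).
Proof.
move=> [Px [e [e_gt0 near_x]]] Pu Pv.
pose M := \sum_i `|u 0 i - v 0 i|.
have M_ge0 : 0 <= M by apply: sumr_ge0.
have le_M i : `|u 0 i - v 0 i| <= M by rewrite /M (bigD1 i) //= lerDl sumr_ge0.
pose t := e / (M + 1).
have t_gt0 : 0 < t by rewrite divr_gt0 // ltr_wpDl.
have tM : t * (M + 1) = e by rewrite /t divfK // gt_eqF // ltr_wpDl.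
exists t => //; apply: near_x => [|i]; first exact: aff_translate.
rewrite !mxE addrAC subrr add0r normrM gtr0_norm //.
have := le_M i; nra.
Qed.

End IntegralEquivalence.

Section EdgeLabelledFlows.
Variables (R : realType) (n : nat).

Definition incidence (e : nat * nat) (v : nat) : R := (e.1 == v)%:R - (e.2 == v)%:R.

Lemma incidence_concat u w z v :
  incidence (u, z) v = incidence (u, w) v + incidence (w, z) v.
Proof. by rewrite /incidence addrA subrK. Qed.

Definition balance q (ed : 'I_q -> nat * nat) (x : 'rV[R]_q) (v : nat) : R :=
  \sum_e x 0 e * incidence (ed e) v.

Definition flow_polytope_of q (ed : 'I_q -> nat * nat) (x : 'rV[R]_q) : Prop :=
  (forall e, 0 <= x 0 e) /\
  forall v : 'I_n.+2, balance ed x v = (val v == 0%N)%:R - (val v == n.+1)%:R.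

Lemma flow_polytope_nth (E : mgraph) (x : 'rV[R]_(size E)) :
  @flow_polytope R n E x <-> flow_polytope_of (fun e : 'I_(size E) => nth (0, 0)%N E e) x.
Proof.
have sum_cond (P : pred 'I_(size E)) : \sum_(e | P e) x 0 e = \sum_e x 0 e * (P e)%:R.
  by rewrite big_mkcond; apply: eq_bigr => e _; case: (P e); rewrite ?mulr1 ?mulr0.
have balanceE v : balance (fun e : 'I_(size E) => nth (0, 0)%N E e) x v =
    \sum_(e < size E | (nth (0, 0)%N E e).1 == v) x 0 e
    - \sum_(e < size E | (nth (0, 0)%N E e).2 == v) x 0 e.
  by rewrite !sum_cond -sumrB; apply: eq_bigr => e _; rewrite mulrBr.
by split=> -[x_ge0 x_bal]; split=> // v; [rewrite balanceE | rewrite -balanceE]; exact: x_bal.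
Qed.

Lemma flow_polytope_of_perm q (s : 'S_q) (ed ed' : 'I_q -> nat * nat) x :
  ed' =1 ed \o s -> flow_polytope_of ed x -> flow_polytope_of ed' (\row_i x 0 (s i)).
Proof.
move=> ed's [x_ge0 x_bal]; split=> [e|v]; first by rewrite mxE.
rewrite -x_bal /balance [RHS](reindex_inj (@perm_inj _ s)).
by apply: eq_bigr => e _; rewrite mxE ed's.
Qed.

Lemma int_equiv_flow_perm q (s : 'S_q) (ed ed' : 'I_q -> nat * nat) :
  ed' =1 ed \o s -> int_equiv (flow_polytope_of ed) (flow_polytope_of ed').
Proof.
move=> ed's; have ed_s : ed =1 ed' \o s^-1%g by move=> x; rewrite /= ed's /= permKV.
apply: (@int_equiv_linear _ _ _ (fun x => \row_i x 0 (s i)) (fun y => \row_i y 0 (s^-1%g i))).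
- by move=> t x y; apply/rowP => i; rewrite !mxE.
- by move=> t x y; apply/rowP => i; rewrite !mxE.
- by move=> x; apply/rowP => i; rewrite !mxE permKV.
- by move=> y; apply/rowP => i; rewrite !mxE permK.
- by move=> x /is_int_ptP x_int; apply/is_int_ptP => i; rewrite mxE.
- by move=> y /is_int_ptP y_int; apply/is_int_ptP => i; rewrite mxE.
- by move=> x; apply: flow_polytope_of_perm.
- by move=> y; apply: flow_polytope_of_perm.
Qed.

Lemma int_equiv_flow_perm_eq q (ed : 'I_q -> nat * nat) (E : mgraph) :
  perm_eq [seq ed i | i <- enum 'I_q] E ->
  int_equiv (@flow_polytope R n E) (flow_polytope_of ed) /\
  int_equiv (flow_polytope_of ed) (@flow_polytope R n E).
Proof.
move=> edE; have q_eq : q = size E by rewrite -(perm_size edE) size_map size_enum_ord.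
subst q; have /tuple_permP [s edE_s] :
  perm_eq [seq ed i | i <- enum 'I_(size E)] (in_tuple E) := edE.
have ed_s : ed =1 (fun e : 'I_(size E) => nth (0, 0)%N E e) \o s.
  move=> i; have := congr1 (nth (0, 0)%N ^~ i) edE_s.
  rewrite /= (nth_map i) ?size_enum_ord // nth_ord_enum => ->.
  by rewrite (nth_map i) ?size_enum_ord // nth_ord_enum (tnth_nth (0, 0)%N).
split.
  apply: int_equiv_trans (int_equiv_flow_perm ed_s).
  by apply: int_equiv_ext => x; apply: flow_polytope_nth.
apply: int_equiv_trans (int_equiv_flow_perm (s := s^-1%g) _) _.
  by move=> i; rewrite /= ed_s /= permKV.
by apply: int_equiv_ext => x; rewrite flow_polytope_nth.
Qed.

Definition path_flow q (i j : 'I_q) : 'rV[R]_q := \row_e ((e == i)%:R + (e == j)%:R).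

Lemma path_flow_mem q (ed : 'I_q -> nat * nat) i j w :
  ed i = (0%N, w) -> ed j = (w, n.+1) -> flow_polytope_of ed (path_flow i j).
Proof.
move=> edi edj; split=> [e|v]; first by rewrite mxE addr_ge0.
have sum_delta k : \sum_e (e == k)%:R * incidence (ed e) v = incidence (ed k) v.
  rewrite (bigD1 k) //= eqxx mul1r big1 ?addr0 // => e /negbTE->.
  by rewrite mul0r.
rewrite /balance (eq_bigr (fun e => (e == i)%:R * incidence (ed e) v
                               + (e == j)%:R * incidence (ed e) v)); last first.
  by move=> e _; rewrite mxE mulrDl.
rewrite big_split /= !sum_delta edi edj.
by rewrite -incidence_concat /incidence /= ![(_ == val v)%N]eq_sym.
Qed.

End EdgeLabelledFlows.

Section Subdivision.
Variables (R : realType) (n r : nat) (h : 'I_r -> nat * nat).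

Inductive slot := InEdge of 'I_n | OutEdge of 'I_n | OtherEdge of 'I_r.

Definition in_edge (k : 'I_n) : 'I_(n + n + r) := lshift r (lshift n k).
Definition out_edge (k : 'I_n) : 'I_(n + n + r) := lshift r (rshift n k).
Definition other_edge (l : 'I_r) : 'I_(n + n + r) := rshift (n + n) l.

Definition slot_of (i : 'I_(n + n + r)) : slot :=
  match split i with
  | inl j => match split j with inl k => InEdge k | inr k => OutEdge k end
  | inr l => OtherEdge l
  end.

Variant slot_spec : 'I_(n + n + r) -> slot -> Type :=
  | SlotIn k : slot_spec (in_edge k) (InEdge k)
  | SlotOut k : slot_spec (out_edge k) (OutEdge k)
  | SlotOther l : slot_spec (other_edge l) (OtherEdge l).

Lemma slotP i : slot_spec i (slot_of i).
Proof.
rewrite -(splitK i) /slot_of unsplitK; case: (split i) => [j|l]; last exact: SlotOther.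
by rewrite /= -(splitK j) unsplitK; case: (split j) => k; [apply: SlotIn | apply: SlotOut].
Qed.

Lemma slot_of_in k : slot_of (in_edge k) = InEdge k.
Proof. by rewrite /slot_of /in_edge !(unsplitK (inl _)). Qed.
Lemma slot_of_out k : slot_of (out_edge k) = OutEdge k.
Proof. by rewrite /slot_of /out_edge (unsplitK (inl _)) (unsplitK (inr _)). Qed.
Lemma slot_of_other l : slot_of (other_edge l) = OtherEdge l.
Proof. by rewrite /slot_of /other_edge (unsplitK (inr _)). Qed.
Definition slotE := (slot_of_in, slot_of_out, slot_of_other).

Lemma big_slots (T : Type) (idx : T) (op : Monoid.com_law idx) (F : 'I_(n + n + r) -> T) :
  \big[op/idx]_i F i =
  op (\big[op/idx]_k op (F (in_edge k)) (F (out_edge k))) (\big[op/idx]_l F (other_edge l)).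
Proof. by rewrite !big_split_ord big_split. Qed.

Lemma eq_in_edge k k' : (in_edge k == in_edge k') = (k == k').
Proof. by rewrite -!val_eqE. Qed.
Lemma eq_out_edge k k' : (out_edge k == out_edge k') = (k == k').
Proof. by rewrite -!val_eqE /= eqn_add2l. Qed.
Lemma in_out_edgeF k k' : (in_edge k == out_edge k') = false.
Proof. by rewrite -val_eqE /= ltn_eqF // ltn_addr. Qed.
Lemma out_in_edgeF k k' : (out_edge k == in_edge k') = false.
Proof. by rewrite eq_sym in_out_edgeF. Qed.
Lemma in_other_edgeF k l : (in_edge k == other_edge l) = false.
Proof. by rewrite -val_eqE /= ltn_eqF // !ltn_addr. Qed.
Lemma out_other_edgeF k l : (out_edge k == other_edge l) = false.
Proof. by rewrite -val_eqE /= ltn_eqF // -addnA ltn_add2l ltn_addr. Qed.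
Definition edge_eqE :=
  (eq_in_edge, eq_out_edge, in_out_edgeF, out_in_edgeF, in_other_edgeF, out_other_edgeF).

Definition edgeG (i : 'I_(n + n + r)) : nat * nat :=
  match slot_of i with
  | InEdge k => (0%N, k.+1)
  | OutEdge k => (k.+1, n.+1)
  | OtherEdge l => h l
  end.

Definition edgeGS (S : {set 'I_n}) (i : 'I_(n + n + r)) : nat * nat :=
  match slot_of i with
  | InEdge k => (0%N, n.+1)
  | OutEdge k => if k \in S then (k.+1, n.+1) else (0%N, k.+1)
  | OtherEdge l => h l
  end.

Definition cell (S : {set 'I_n}) (x : 'rV[R]_(n + n + r)) : Prop :=
  flow_polytope_of n edgeG x /\
  forall k, if k \in S then x 0 (in_edge k) <= x 0 (out_edge k)
            else x 0 (out_edge k) <= x 0 (in_edge k).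

Definition shortcut (S : {set 'I_n}) (x : 'rV[R]_(n + n + r)) : 'rV[R]_(n + n + r) :=
  \row_i match slot_of i with
  | InEdge k => if k \in S then x 0 (in_edge k) else x 0 (out_edge k)
  | OutEdge k => if k \in S then x 0 (out_edge k) - x 0 (in_edge k)
                 else x 0 (in_edge k) - x 0 (out_edge k)
  | OtherEdge _ => x 0 i
  end.

Definition unshortcut (S : {set 'I_n}) (y : 'rV[R]_(n + n + r)) : 'rV[R]_(n + n + r) :=
  \row_i match slot_of i with
  | InEdge k => if k \in S then y 0 (in_edge k) else y 0 (in_edge k) + y 0 (out_edge k)
  | OutEdge k => if k \in S then y 0 (in_edge k) + y 0 (out_edge k) else y 0 (in_edge k)
  | OtherEdge _ => y 0 i
  end.

Lemma shortcut_linear S : linear (shortcut S).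
Proof.
move=> t x y; apply/rowP => i; rewrite !mxE.
by case: slotP => [k|k|l] /=; rewrite ?mxE //; case: (k \in S); rewrite ?mxE; ring.
Qed.

Lemma unshortcut_linear S : linear (unshortcut S).
Proof.
move=> t x y; apply/rowP => i; rewrite !mxE.
by case: slotP => [k|k|l] /=; rewrite ?mxE //; case: (k \in S); rewrite ?mxE; ring.
Qed.

Lemma shortcutK S : cancel (shortcut S) (unshortcut S).
Proof.
move=> x; apply/rowP => i; rewrite !mxE.
by case: slotP => [k|k|l]; rewrite /= ?mxE ?slotE //=; case: (k \in S); ring.
Qed.

Lemma unshortcutK S : cancel (unshortcut S) (shortcut S).
Proof.
move=> y; apply/rowP => i; rewrite !mxE.
by case: slotP => [k|k|l]; rewrite /= ?mxE ?slotE //=; case: (k \in S); ring.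
Qed.

Lemma shortcut_int S x : is_int_pt x -> is_int_pt (shortcut S x).
Proof.
move=> /is_int_ptP x_int; apply/is_int_ptP => i; rewrite mxE.
by case: slotP => [k|k|l] //=; case: (k \in S); rewrite ?rpredB.
Qed.

Lemma unshortcut_int S y : is_int_pt y -> is_int_pt (unshortcut S y).
Proof.
move=> /is_int_ptP y_int; apply/is_int_ptP => i; rewrite mxE.
by case: slotP => [k|k|l] //=; case: (k \in S); rewrite ?rpredD.
Qed.

Lemma balance_shortcut S x v :
  balance (edgeGS S) (shortcut S x) v = balance edgeG x v.
Proof.
rewrite /balance !big_slots /=; congr (_ + _); [apply: eq_bigr => k _ | apply: eq_bigr => l _].
  rewrite !mxE /edgeG /edgeGS !slotE (incidence_concat _ 0 k.+1).
  by case: (k \in S); ring.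
by rewrite mxE /edgeG /edgeGS slotE.
Qed.

Lemma cell_shortcut S x : cell S x -> flow_polytope_of n (edgeGS S) (shortcut S x).
Proof.
move=> [[x_ge0 x_bal] x_S]; split=> [i|v]; last by rewrite balance_shortcut.
rewrite mxE; case: slotP => [k|k|l] //=; have := x_S k.
  by case: (k \in S).
by case: (k \in S); rewrite subr_ge0.
Qed.

Lemma unshortcut_cell S y : flow_polytope_of n (edgeGS S) y -> cell S (unshortcut S y).
Proof.
move=> [y_ge0 y_bal]; split; [split=> [i|v] | move=> k].
- by rewrite mxE; case: slotP => [k|k|l] //=; case: (k \in S); rewrite ?addr_ge0.
- by rewrite -(balance_shortcut S) unshortcutK.
- rewrite !mxE !slotE /=; have := y_ge0 (out_edge k); have := y_ge0 (in_edge k).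
  by case: (k \in S); lra.
Qed.

Lemma int_equiv_cell S : int_equiv (cell S) (flow_polytope_of n (edgeGS S)).
Proof.
apply: (int_equiv_linear (shortcut_linear S) (unshortcut_linear S)).
- exact: shortcutK.
- exact: unshortcutK.
- exact: shortcut_int.
- exact: unshortcut_int.
- exact: cell_shortcut.
- exact: unshortcut_cell.
Qed.

Lemma int_equiv_cells : int_equiv (flow_polytope_of n edgeG) (fun x => exists S, cell S x).
Proof.
apply: int_equiv_ext => x; split=> [x_flow|[S []] //].
exists [set k | x 0 (in_edge k) <= x 0 (out_edge k)]; split=> // k.
by rewrite inE; case: leP => // /ltW.
Qed.

Hypothesis other_sink : forall k : 'I_n, exists l, h l = (k.+1, n.+1).

Lemma cell_not_relint (S T : {set 'I_n}) k x :
  k \in S -> k \notin T -> cell S x -> ~ relint (cell T) x.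
Proof.
move=> kS kT [_ x_S] x_T; have [l hl] := other_sink k.
pose u := path_flow R (in_edge k) (out_edge k).
pose v := path_flow R (in_edge k) (other_edge l).
have uT : cell T u.
  split; first by apply: path_flow_mem; rewrite /edgeG slotE.
  by move=> k'; rewrite !mxE !edge_eqE addr0 add0r; case: (_ \in T).
have vT : cell T v.
  split; first by apply: path_flow_mem; rewrite /edgeG slotE ?hl.
  move=> k'; rewrite !mxE !edge_eqE !mulr0n !addr0.
  by case: eqP => [->|_]; rewrite ?(negbTE kT) ?ler01 //; case: (_ \in T).
have [t t_gt0 [_ /(_ k)]] := relint_translate x_T uT vT.
rewrite (negbTE kT) !mxE !edge_eqE eqxx /=; have := x_S k; rewrite kS.
lra.
Qed.

Lemma relint_cells_disjoint (S T : {set 'I_n}) x :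
  S != T -> ~ (relint (cell S) x /\ relint (cell T) x).
Proof.
move=> neqST [x_S x_T]; have [k] : exists k, (k \in S) != (k \in T).
  apply/existsP; apply: contraR neqST => /existsPn eqST.
  by apply/eqP/setP => k; move/negPn/eqP: (eqST k).
case kS: (k \in S); case kT: (k \in T) => // _.
  exact: cell_not_relint kS (negbT kT) x_S.1 x_T.
exact: cell_not_relint kT (negbT kS) x_T.1 x_S.
Qed.

End Subdivision.

Section Multiplicities.
Local Open Scope nat_scope.

Lemma count_sum (T : Type) (pr : pred T) (s : seq T) : count pr s = \sum_(x <- s) pr x.
Proof. by rewrite -sumn_count sumnE big_map. Qed.

Lemma count_map_enum (T : Type) q (pr : pred T) (f : 'I_q -> T) :
  count pr [seq f i | i <- enum 'I_q] = \sum_(i < q) pr (f i).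
Proof. by rewrite count_sum big_map big_enum. Qed.

Lemma count_flatten_nseq (I T : Type) (pr : pred T) (m : I -> nat) (e : I -> T) (s : seq I) :
  count pr (flatten [seq nseq (m i) (e i) | i <- s]) = \sum_(i <- s) pr (e i) * m i.
Proof. by rewrite count_flatten sumnE !big_map; apply: eq_bigr => i _; rewrite count_nseq. Qed.

Lemma big_iota1 n (F : nat -> nat) : \sum_(i <- iota 1 n) F i = \sum_(k < n) F k.+1.
Proof. by rewrite -(big_mkord xpredT (fun k => F k.+1)) /index_iota subn0 (iotaDl 1 0) big_map. Qed.

Lemma count_kabc n a b c (pr : pred (nat * nat)) :
  count pr (kabc n a b c) =
  \sum_(k < n) (pr (0, k.+1) * a + pr (k.+1, n.+1) * b)
  + \sum_(p <- inner_pairs n) pr p * c.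
Proof. by rewrite /kabc !count_cat !count_flatten_nseq !big_iota1 big_split addnA. Qed.

Lemma count_kabcS n a b c (S : {set 'I_n}) (pr : pred (nat * nat)) :
  count pr (kabcS a b c S) =
  \sum_(k < n) (pr (0, n.+1) + (pr (0, k.+1) * (a - (k \in S))
                                 + pr (k.+1, n.+1) * (b + (k \in S))))
  + \sum_(p <- inner_pairs n) pr p * c.
Proof.
rewrite /kabcS !count_cat count_nseq !count_flatten_nseq !big_enum /= !big_split /=.
by rewrite sum_nat_const card_ord mulnC !addnA.
Qed.

Lemma count_edgeG n r (h : 'I_r -> nat * nat) (pr : pred (nat * nat)) :
  count pr [seq edgeG h i | i <- enum 'I_(n + n + r)] =
  \sum_(k < n) (pr (0, k.+1) + pr (k.+1, n.+1)) + \sum_l pr (h l).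
Proof.
rewrite count_map_enum big_slots /=; congr (_ + _).
by apply: eq_bigr => k _; rewrite /edgeG !slotE.
by apply: eq_bigr => l _; rewrite /edgeG !slotE.
Qed.

Lemma count_edgeGS n r (h : 'I_r -> nat * nat) (S : {set 'I_n}) (pr : pred (nat * nat)) :
  count pr [seq edgeGS h S i | i <- enum 'I_(n + n + r)] =
  \sum_(k < n) (pr (0, n.+1) + pr (if k \in S then (k.+1, n.+1) else (0, k.+1)))
  + \sum_l pr (h l).
Proof.
rewrite count_map_enum big_slots /=; congr (_ + _).
by apply: eq_bigr => k _; rewrite /edgeGS !slotE.
by apply: eq_bigr => l _; rewrite /edgeGS !slotE.
Qed.

Definition rest_edges n a b c : mgraph :=
  [seq ((val k).+1, n.+1) | k <- enum 'I_n] ++ kabc n a.-1 b.-1 c.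

Lemma sum_tnth_count (T : eqType) (s : seq T) (pr : pred T) :
  \sum_(l < size s) pr (tnth (in_tuple s) l) = count pr s.
Proof. by rewrite count_sum big_tnth. Qed.

Lemma count_rest_edges n a b c (pr : pred (nat * nat)) :
  count pr (rest_edges n a b c) =
  \sum_(k < n) pr (k.+1, n.+1) + count pr (kabc n a.-1 b.-1 c).
Proof. by rewrite count_cat count_map_enum. Qed.

Lemma rest_edges_sinks n a b c (k : 'I_n) :
  exists l, tnth (in_tuple (rest_edges n a b c)) l = (k.+1, n.+1).
Proof.
have lt_k : k < size (rest_edges n a b c).
  by rewrite size_cat size_map size_enum_ord ltn_addr.
exists (Ordinal lt_k); rewrite (tnth_nth (0, 0)) /= nth_cat size_map size_enum_ord ltn_ord.
by rewrite (nth_map k) ?size_enum_ord // nth_ord_enum.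
Qed.

Lemma perm_edgeG_kabc n a b c : 0 < a -> 0 < b ->
  perm_eq [seq edgeG (tnth (in_tuple (rest_edges n a b c))) i | i <- enum 'I_(n + n + _)]
          (kabc n a b.+1 c).
Proof.
move=> a_gt0 b_gt0; apply/seq.permP => pr.
rewrite count_edgeG sum_tnth_count count_rest_edges !count_kabc.
case: a a_gt0 => // a _; case: b b_gt0 => // b _ /=.
rewrite !addnA -!big_split /=; congr (_ + _); apply: eq_bigr => k _; ring.
Qed.

Lemma perm_edgeGS_kabcS n a b c (S : {set 'I_n}) : 0 < a -> 0 < b ->
  perm_eq [seq edgeGS (tnth (in_tuple (rest_edges n a b c))) S i | i <- enum 'I_(n + n + _)]
          (kabcS a b c S).
Proof.
move=> a_gt0 b_gt0; apply/seq.permP => pr.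
rewrite count_edgeGS sum_tnth_count count_rest_edges count_kabc count_kabcS.
case: a a_gt0 => // a _; case: b b_gt0 => // b _ /=.
rewrite !addnA -!big_split /=; congr (_ + _); apply: eq_bigr => k _.
by case: (k \in S) => /=; lia.
Qed.

End Multiplicities.

Theorem lemma5p3 (R : realType) (n a b c : nat) :
  (0 < n)%N -> (0 < a)%N -> (0 < b)%N ->
  exists (m : nat) (P : {set 'I_n} -> 'rV[R]_m -> Prop),
    (forall S T : {set 'I_n}, S != T ->
       forall x, ~ (relint (P S) x /\ relint (P T) x)) /\
    int_equiv (@flow_polytope R n (kabc n a b.+1 c))
              (fun x => exists S, P S x) /\
    (forall S : {set 'I_n}, int_equiv (P S) (@flow_polytope R n (@kabcS n a b c S))).
Proof.
move=> _ a_gt0 b_gt0; pose h := tnth (in_tuple (rest_edges n a b c)).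
exists (n + n + size (rest_edges n a b c))%N, (@cell R n _ h); split; [|split].
- by move=> S T neqST x; apply: relint_cells_disjoint => // k; apply: rest_edges_sinks.
- have [toG _] := int_equiv_flow_perm_eq R n (perm_edgeG_kabc n c a_gt0 b_gt0).
  exact: int_equiv_trans toG (int_equiv_cells R n h).
- move=> S.
  have [_ fromGS] := int_equiv_flow_perm_eq R n (perm_edgeGS_kabcS c S a_gt0 b_gt0).
  exact: int_equiv_trans (int_equiv_cell R h S) fromGS.
Qed.
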